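(* Let $P$ be the program with a single integer-valued program variable $n$ and no random variables: $n:=1$; while $n\ge1$ do if prob($\tfrac12$) then $n:=n+1$ else $n:=n-1$; $n:=n-1$ fi od. Then $P$ terminates almost surely and its expected termination time $\mathsf{ET}(P)$ (the expected value of $T$ in its stochastic game structure $\mathcal{G}_P$; there are no schedulers since there is no nondeterminism) is an irrational number.
   Context: The stochastic game structure $\mathcal{G}_P$ is built inductively: an assignment $x:=e$ gives two deterministic locations $\ell^{in},\ell^{out}$ and one transition $\ell^{in}\to\ell^{out}$ performing the update; a sequence $Q_1;Q_2$ identifies $\ell^{out}_{Q_1}$ with $\ell^{in}_{Q_2}$; a loop ''while $\phi$ do $Q$ od'' adds a deterministic location $\ell^{in}$ identified with $\ell^{out}_Q$, a new location $\ell^{out}$, and identity transitions $\ell^{in}\to\ell^{in}_Q$ with guard $\phi$ and $\ell^{in}\to\ell^{out}$ with guard $\neg\phi$; ''if prob($p$) then $Q_1$ else $Q_2$ fi'' adds a probabilistic location $\ell^{in}$ with identity transitions to $\ell^{in}_{Q_1}$ (probability $p$) and $\ell^{in}_{Q_2}$ (probability $1-p$), and identifies $\ell^{out}_{Q_1},\ell^{out}_{Q_2}$ with the statement's $\ell^{out}$. The program's final $\ell^{out}$ is the terminal location $\ell_{out}$ (with a self-loop). A run $c_1c_2\cdots$ starts at $c_1$ = (initial location, initial valuation) and each step follows one transition; $T=\min\{n:\text{the location of }c_n\text{ is }\ell_{out}\}$. *)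

From Stdlib Require Import Reals ZArith List Bool.
Import ListNotations.
Open Scope R_scope.

Definition valuation := Z.

(* A transition: source location, guard, update, target location, and the
   probability with which it is taken (1 for transitions out of
   deterministic locations, p / 1-p out of probabilistic locations). *)
Record transition := mkTr {
  tr_src : nat;
  tr_guard : valuation -> bool;
  tr_upd : valuation -> valuation;
  tr_tgt : nat;
  tr_prob : R }.

Record sgs := mkSGS {
  locs_init : nat;
  loc_out : nat;
  trans : list transition }.

Definition config := (nat * valuation)%type.

Definition succ (G : sgs) (c : config) : list (R * config) :=
  map (fun t => (tr_prob t, (tr_tgt t, tr_upd t (snd c))))
      (filter (fun t => andb (Nat.eqb (tr_src t) (fst c)) (tr_guard t (snd c)))
              (trans G)).

(* hitT G m c = probability (under the run measure started with c_1 = c)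
   that T = m, where T = min {m : location of c_m is loc_out}  (m >= 1). *)
Fixpoint hitT (G : sgs) (m : nat) (c : config) : R :=
  match m with
  | O => 0
  | S m' =>
      if Nat.eqb (fst c) (loc_out G) then (match m' with O => 1 | _ => 0 end)
      else match m' with
           | O => 0
           | _ => fold_right Rplus 0
                    (map (fun pc => fst pc * hitT G m' (snd pc)) (succ G c))
           end
  end.

Definition terminates_as (G : sgs) (c1 : config) : Prop :=
  infinite_sum (fun k => hitT G (S k) c1) 1.

Definition expected_time_is (G : sgs) (c1 : config) (e : R) : Prop :=
  infinite_sum (fun k => INR (S k) * hitT G (S k) c1) e.

Definition irrational (x : R) : Prop :=
  forall p q : Z, q <> 0%Z -> x <> IZR p / IZR q.

(* ---------- The game structure G_P of the program
   n:=1; while n>=1 do if prob(1/2) then n:=n+1 else n:=n-1; n:=n-1 fi od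
   built by the inductive construction:
     0 --(n:=1)--> 1                         (assignment)
     1 --[n>=1]--> 2 ,  1 --[n<1]--> 6        (while; 1 = l_in of loop)
     2 --1/2--> 3 ,  2 --1/2--> 4             (probabilistic if)
     3 --(n:=n+1)--> 1                        (then branch, out = loop in)
     4 --(n:=n-1)--> 5 --(n:=n-1)--> 1        (else branch, sequence)
     6 --> 6                                  (terminal self-loop)   *)
Definition always (_ : valuation) := true.

Definition GP : sgs := mkSGS 0 6
  [ mkTr 0 always (fun _ => 1%Z) 1 1;
    mkTr 1 (fun n => Z.leb 1 n) (fun n => n) 2 1;
    mkTr 1 (fun n => negb (Z.leb 1 n)) (fun n => n) 6 1;
    mkTr 2 always (fun n => n) 3 (1/2);
    mkTr 2 always (fun n => n) 4 (1 - 1/2);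
    mkTr 3 always (fun n => (n + 1)%Z) 1 1;
    mkTr 4 always (fun n => (n - 1)%Z) 5 1;
    mkTr 5 always (fun n => (n - 1)%Z) 1 1;
    mkTr 6 always (fun n => n) 6 1 ].

(* The loop is a random walk on n with increments +1 and -2, each with probability 1/2;
   an iteration takes 3 or 4 steps.  P(T < oo) and E[T] are limits of monotone partial
   sums, so they satisfy the one-step equations of the chain; a ranking supermartingale
   that is linear in n bounds E[T].  At the loop head both quantities therefore solve
   2 u(n) = u(n+1) + u(n-2) + b for n >= 1, with constant exit values for n <= 0, and
   grow at most linearly.  The characteristic polynomial x^3 - 2x^2 + 1 factors as
   (x - 1)(x^2 - x - 1); a solution with zero exit values is a multiple of a
   Fibonacci-like sequence, so linear growth forces it to vanish.  Hence termination is
   almost sure and E[T] = 10 - 7 psi = (13 + 7 sqrt 5) / 2 with psi = (1 - sqrt 5) / 2,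
   which is irrational because sqrt 5 is. *)

From Stdlib Require Import Reals ZArith Znumtheory Lra Lia List.
Open Scope R_scope.

Lemma Un_cv_const (r : R) : Un_cv (fun _ => r) r.
Proof. intros eps Heps; exists 0%nat; intros n _; unfold Rdist; rewrite Rminus_diag, Rabs_R0; exact Heps. Qed.

Lemma Un_cv_ext (u v : nat -> R) (l : R) :
  (forall n, u n = v n) -> Un_cv u l -> Un_cv v l.
Proof. intros E H eps Heps; destruct (H eps Heps) as [N HN]; exists N; intros n Hn; rewrite <- E; auto. Qed.

Lemma Un_cv_S (u : nat -> R) (l : R) : Un_cv u l -> Un_cv (fun n => u (S n)) l.
Proof. intros H eps Heps; destruct (H eps Heps) as [N HN]; exists N; intros n Hn; apply HN; lia. Qed.

Lemma Un_cv_bounds (u : nat -> R) (l a b : R) :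
  Un_cv u l -> (forall n, a <= u n <= b) -> a <= l <= b.
Proof.
  intros Hu Hab; split.
  - apply (Rle_cv_lim (Un := fun _ => a) (Vn := u)); [apply Hab | apply Un_cv_const | exact Hu].
  - apply (Rle_cv_lim (Un := u) (Vn := fun _ => b)); [apply Hab | exact Hu | apply Un_cv_const].
Qed.

Lemma growing_bounded_cv (u : nat -> R) (K : R) :
  Un_growing u -> (forall n, u n <= K) -> {l | Un_cv u l}.
Proof. intros Hg Hb; apply growing_cv; [exact Hg|]; exists K; intros x [n ->]; apply Hb. Qed.

Section Expectation.

Context {A : Type}.

Definition expect (d : list (R * A)) (f : A -> R) : R :=
  fold_right Rplus 0 (map (fun pc => fst pc * f (snd pc)) d).

Lemma expect_plus d f g : expect d (fun x => f x + g x) = expect d f + expect d g.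
Proof. unfold expect; induction d as [|[p x] d IH]; simpl; [ring|]; rewrite IH; ring. Qed.

Lemma expect_scal d a f : expect d (fun x => a * f x) = a * expect d f.
Proof. unfold expect; induction d as [|[p x] d IH]; simpl; [ring|]; rewrite IH; ring. Qed.

Lemma expect_ext d f g : (forall x, f x = g x) -> expect d f = expect d g.
Proof. intros E; unfold expect; induction d as [|[p x] d IH]; simpl; [ring|]; rewrite IH, E; ring. Qed.

Lemma expect_nonneg d f :
  Forall (fun pc => 0 <= fst pc) d -> (forall x, 0 <= f x) -> 0 <= expect d f.
Proof.
  intros Hd Hf; unfold expect; induction Hd as [|[p x] d Hp Hd IH]; simpl in *; [lra|].
  pose proof (Hf x); nra.
Qed.

Lemma expect_le d f g :
  Forall (fun pc => 0 <= fst pc) d -> (forall x, f x <= g x) -> expect d f <= expect d g.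
Proof.
  intros Hd Hfg; unfold expect; induction Hd as [|[p x] d Hp Hd IH]; simpl in *; [lra|].
  pose proof (Hfg x); nra.
Qed.

Lemma expect_cv d (f : nat -> A -> R) (g : A -> R) :
  (forall x, Un_cv (fun M => f M x) (g x)) -> Un_cv (fun M => expect d (f M)) (expect d g).
Proof.
  intros Hf; unfold expect; induction d as [|[p x] d IH]; simpl.
  - apply Un_cv_const.
  - apply CV_plus; [apply CV_mult; [apply Un_cv_const | apply Hf] | exact IH].
Qed.

End Expectation.

Definition step (G : sgs) (f : config -> R) (c : config) : R := expect (succ G c) f.

Definition mass (G : sgs) (M : nat) (c : config) : R :=
  sum_f_R0 (fun k => hitT G (S k) c) M.

Definition moment (G : sgs) (M : nat) (c : config) : R :=
  sum_f_R0 (fun k => INR (S k) * hitT G (S k) c) M.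

Section RunSums.

Variable G : sgs.

Lemma hitT_terminal m c :
  fst c = loc_out G -> hitT G (S m) c = match m with O => 1 | _ => 0 end.
Proof. intros Hc; simpl; rewrite Hc, Nat.eqb_refl; reflexivity. Qed.

Lemma hitT_1 c : fst c <> loc_out G -> hitT G 1 c = 0.
Proof. intros Hc; simpl; apply Nat.eqb_neq in Hc; rewrite Hc; reflexivity. Qed.

Lemma hitT_SS m c :
  fst c <> loc_out G -> hitT G (S (S m)) c = step G (hitT G (S m)) c.
Proof. intros Hc; simpl; apply Nat.eqb_neq in Hc; rewrite Hc; reflexivity. Qed.

Lemma mass_terminal M c : fst c = loc_out G -> mass G M c = 1.
Proof.
  intros Hc; induction M as [|M IH]; unfold mass in *; cbn [sum_f_R0];
    [|rewrite IH]; rewrite hitT_terminal by exact Hc; ring.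
Qed.

Lemma moment_terminal M c : fst c = loc_out G -> moment G M c = 1.
Proof.
  intros Hc; induction M as [|M IH]; unfold moment in *; cbn [sum_f_R0];
    [|rewrite IH]; rewrite hitT_terminal by exact Hc; simpl; ring.
Qed.

Lemma mass_S M c : fst c <> loc_out G -> mass G (S M) c = step G (mass G M) c.
Proof.
  intros Hc; induction M as [|M IH].
  - unfold mass; cbn [sum_f_R0]; rewrite hitT_1, hitT_SS by exact Hc.
    rewrite Rplus_0_l; reflexivity.
  - change (mass G (S (S M)) c) with (mass G (S M) c + hitT G (S (S (S M))) c).
    rewrite IH, hitT_SS by exact Hc; unfold step; rewrite <- expect_plus; reflexivity.
Qed.

Lemma moment_S M c :
  fst c <> loc_out G ->
  moment G (S M) c = step G (fun c' => moment G M c' + mass G M c') c.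
Proof.
  intros Hc; induction M as [|M IH].
  - unfold moment, mass; cbn [sum_f_R0]; rewrite hitT_1, hitT_SS by exact Hc.
    unfold step; rewrite <- expect_scal; simpl INR; rewrite Rmult_0_r, Rplus_0_l.
    apply expect_ext; intros; ring.
  - change (moment G (S (S M)) c)
      with (moment G (S M) c + INR (S (S (S M))) * hitT G (S (S (S M))) c).
    rewrite IH, hitT_SS by exact Hc; unfold step; rewrite <- expect_scal, <- expect_plus.
    apply expect_ext; intros c'; unfold moment, mass; cbn [sum_f_R0].
    rewrite !S_INR; ring.
Qed.

Hypothesis prob_nonneg : Forall (fun t => 0 <= tr_prob t) (trans G).

Lemma succ_prob_nonneg c : Forall (fun pc => 0 <= fst pc) (succ G c).
Proof.
  unfold succ; apply Forall_map, Forall_forall; intros t Ht.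
  apply filter_In in Ht as [Ht _]; exact (proj1 (Forall_forall _ _) prob_nonneg t Ht).
Qed.

Lemma hitT_nonneg m c : 0 <= hitT G m c.
Proof.
  revert c; induction m as [|[|m] IH]; intros c; [simpl; lra| |];
    destruct (Nat.eq_dec (fst c) (loc_out G)) as [Hc|Hc].
  - rewrite hitT_terminal by exact Hc; lra.
  - rewrite hitT_1 by exact Hc; lra.
  - rewrite hitT_terminal by exact Hc; lra.
  - rewrite hitT_SS by exact Hc; apply expect_nonneg; [apply succ_prob_nonneg | exact IH].
Qed.

Lemma mass_growing c : Un_growing (fun M => mass G M c).
Proof. intros M; unfold mass; cbn [sum_f_R0]; pose proof (hitT_nonneg (S (S M)) c); lra. Qed.

Lemma moment_growing c : Un_growing (fun M => moment G M c).
Proof.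
  intros M; unfold moment; cbn [sum_f_R0].
  pose proof (hitT_nonneg (S (S M)) c); pose proof (pos_INR (S (S M))); nra.
Qed.

Hypothesis substochastic : forall c, step G (fun _ => 1) c <= 1.

Lemma mass_bounds M c : 0 <= mass G M c <= 1.
Proof.
  revert c; induction M as [|M IH]; intros c;
    destruct (Nat.eq_dec (fst c) (loc_out G)) as [Hc|Hc];
    try (rewrite mass_terminal by exact Hc; lra).
  - unfold mass; cbn [sum_f_R0]; rewrite hitT_1 by exact Hc; lra.
  - rewrite mass_S by exact Hc; split.
    + apply expect_nonneg; [apply succ_prob_nonneg | apply IH].
    + eapply Rle_trans; [|apply substochastic].
      apply expect_le; [apply succ_prob_nonneg | apply IH].
Qed.

Definition term_prob (c : config) : R :=
  proj1_sig (growing_bounded_cv _ 1 (mass_growing c) (fun M => proj2 (mass_bounds M c))).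

Lemma term_prob_cv c : Un_cv (fun M => mass G M c) (term_prob c).
Proof. exact (proj2_sig (growing_bounded_cv _ _ _ _)). Qed.

Lemma term_prob_bounds c : 0 <= term_prob c <= 1.
Proof. exact (Un_cv_bounds _ _ _ _ (term_prob_cv c) (fun M => mass_bounds M c)). Qed.

Lemma term_prob_terminal c : fst c = loc_out G -> term_prob c = 1.
Proof.
  intros Hc; apply (UL_sequence _ _ _ (term_prob_cv c)).
  apply (Un_cv_ext (fun _ => 1)); [intros M; symmetry; apply mass_terminal, Hc | apply Un_cv_const].
Qed.

Lemma term_prob_step c : fst c <> loc_out G -> term_prob c = step G term_prob c.
Proof.
  intros Hc; apply (UL_sequence _ _ _ (Un_cv_S _ _ (term_prob_cv c))).
  apply (Un_cv_ext (fun M => step G (mass G M) c)); [intros M; symmetry; apply mass_S, Hc|].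
  apply expect_cv; intros; apply term_prob_cv.
Qed.

Variable V : config -> R.
Hypothesis V_nonneg : forall c, 0 <= V c.
Hypothesis V_terminal : forall c, fst c = loc_out G -> 1 <= V c.
Hypothesis V_super : forall c, fst c <> loc_out G -> step G (fun c' => V c' + 1) c <= V c.

Lemma moment_bounds M c : 0 <= moment G M c <= V c.
Proof.
  revert c; induction M as [|M IH]; intros c;
    destruct (Nat.eq_dec (fst c) (loc_out G)) as [Hc|Hc];
    try (rewrite moment_terminal by exact Hc; pose proof (V_terminal c Hc); lra).
  - unfold moment; cbn [sum_f_R0]; rewrite hitT_1 by exact Hc; pose proof (V_nonneg c); lra.
  - rewrite moment_S by exact Hc; split.
    + apply expect_nonneg; [apply succ_prob_nonneg|].
      intros c'; pose proof (IH c'); pose proof (mass_bounds M c'); lra.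
    + eapply Rle_trans; [|apply V_super, Hc].
      apply expect_le; [apply succ_prob_nonneg|].
      intros c'; pose proof (IH c'); pose proof (mass_bounds M c'); lra.
Qed.

Definition exp_time (c : config) : R :=
  proj1_sig (growing_bounded_cv _ (V c) (moment_growing c) (fun M => proj2 (moment_bounds M c))).

Lemma exp_time_cv c : Un_cv (fun M => moment G M c) (exp_time c).
Proof. exact (proj2_sig (growing_bounded_cv _ _ _ _)). Qed.

Lemma exp_time_bounds c : 0 <= exp_time c <= V c.
Proof. exact (Un_cv_bounds _ _ _ _ (exp_time_cv c) (fun M => moment_bounds M c)). Qed.

Lemma exp_time_terminal c : fst c = loc_out G -> exp_time c = 1.
Proof.
  intros Hc; apply (UL_sequence _ _ _ (exp_time_cv c)).
  apply (Un_cv_ext (fun _ => 1)); [intros M; symmetry; apply moment_terminal, Hc | apply Un_cv_const].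
Qed.

Lemma exp_time_step c :
  fst c <> loc_out G -> exp_time c = step G (fun c' => exp_time c' + term_prob c') c.
Proof.
  intros Hc; apply (UL_sequence _ _ _ (Un_cv_S _ _ (exp_time_cv c))).
  apply (Un_cv_ext (fun M => step G (fun c' => moment G M c' + mass G M c') c));
    [intros M; symmetry; apply moment_S, Hc|].
  apply (expect_cv _ (fun M c' => moment G M c' + mass G M c')).
  intros; apply CV_plus; [apply exp_time_cv | apply term_prob_cv].
Qed.

End RunSums.

Definition loop_rec (b : R) (u : nat -> R) : Prop :=
  forall j, 2 * u (S (S j)) = u (S (S (S j))) + u j + b.

Fixpoint loop_fund (k : nat) : R :=
  match k with
  | O | S O => 0
  | S ((S j) as k') => loop_fund k' + loop_fund j + 1
  end.

Lemma loop_fund_quadratic k : INR k * (INR k - 3) / 8 <= loop_fund k.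
Proof.
  enough (H : INR k * (INR k - 3) / 8 <= loop_fund k /\
              INR (S k) * (INR (S k) - 3) / 8 <= loop_fund (S k)) by apply H.
  induction k as [|k [IH1 IH2]]; [simpl; lra|]; split; [exact IH2|].
  change (loop_fund (S (S k))) with (loop_fund (S k) + loop_fund k + 1).
  rewrite !S_INR in *; pose proof (pos_INR k); nra.
Qed.

Lemma loop_rec_homogeneous u :
  loop_rec 0 u -> u 0%nat = 0 -> u 1%nat = 0 -> forall k, u k = u 2%nat * loop_fund k.
Proof.
  intros Hu H0 H1.
  enough (H : forall k, u k = u 2%nat * loop_fund k /\ u (S k) = u 2%nat * loop_fund (S k) /\
                        u (S (S k)) = u 2%nat * loop_fund (S (S k))) by apply H.
  induction k as [|k (IH1 & IH2 & IH3)].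
  - simpl; rewrite H0, H1; repeat split; ring.
  - repeat split; [exact IH2 | exact IH3|].
    change (loop_fund (S (S (S k)))) with (loop_fund (S (S k)) + loop_fund (S k) + 1).
    change (loop_fund (S (S k))) with (loop_fund (S k) + loop_fund k + 1) in *.
    pose proof (Hu k); lra.
Qed.

Lemma quadratic_not_linear a C K :
  0 < a -> exists k : nat, C * INR k + K < a * (INR k * (INR k - 3)).
Proof.
  intros Ha.
  destruct (INR_archimed a (3 * a + Rabs C + Rabs K)) as [n Hn]; [lra|].
  exists (S n); rewrite S_INR.
  pose proof (pos_INR n); pose proof (Rle_abs C); pose proof (Rle_abs K);
    pose proof (Rabs_pos C); pose proof (Rabs_pos K); nra.
Qed.

Lemma loop_rec_unique b u v C K :
  loop_rec b u -> loop_rec b v -> u 0%nat = v 0%nat -> u 1%nat = v 1%nat ->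
  (forall k, Rabs (u k - v k) <= C * INR k + K) -> forall k, u k = v k.
Proof.
  intros Hu Hv H0 H1 Hbound.
  set (d := fun k => u k - v k).
  assert (Hd : forall k, d k = d 2%nat * loop_fund k).
  { apply loop_rec_homogeneous; unfold d; [intros j; pose proof (Hu j); pose proof (Hv j); lra | lra | lra]. }
  assert (Hd2 : d 2%nat = 0).
  { destruct (Req_dec (d 2%nat) 0) as [|Hne]; [assumption|exfalso].
    destruct (quadratic_not_linear (Rabs (d 2%nat) / 8) C K) as [k Hk].
    { pose proof (Rabs_pos_lt _ Hne); lra. }
    pose proof (Hbound k) as Hb; fold (d k) in Hb; rewrite Hd, Rabs_mult in Hb.
    pose proof (loop_fund_quadratic k) as Hq.
    assert (Rabs (d 2%nat) * (INR k * (INR k - 3) / 8) <= Rabs (d 2%nat) * Rabs (loop_fund k))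
      by (apply Rmult_le_compat_l; [apply Rabs_pos | pose proof (Rle_abs (loop_fund k)); lra]).
    lra. }
  intros k; pose proof (Hd k) as E; rewrite Hd2, Rmult_0_l in E; unfold d in E; lra.
Qed.

Lemma prime_5 : prime 5.
Proof.
  apply prime_intro; [lia|]; intros n Hn; apply Zgcd_1_rel_prime.
  assert (n = 1 \/ n = 2 \/ n = 3 \/ n = 4)%Z as [E|[E|[E|E]]] by lia; subst; reflexivity.
Qed.

Lemma prime_divide_square p x : prime p -> (p | x * x)%Z -> exists a, x = (a * p)%Z.
Proof. intros Hp Hx; destruct (prime_mult p Hp x x Hx) as [H|H]; exact H. Qed.

Lemma prime_square_eq_0 p x y : prime p -> (x * x = p * (y * y))%Z -> y = 0%Z.
Proof.
  intros Hp; pose proof (prime_ge_2 p Hp) as Hp2.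
  enough (H : forall n x y, (Z.abs_nat y < n)%nat -> (x * x = p * (y * y))%Z -> y = 0%Z)
    by (apply (H (S (Z.abs_nat y))); lia).
  clear x y; induction n as [|n IH]; intros x y Hn Hxy; [lia|].
  destruct (prime_divide_square p x Hp) as [a ->]; [exists (y * y)%Z; lia|].
  assert (Hya : (y * y = p * (a * a))%Z).
  { apply (Z.mul_cancel_l _ _ p); [lia|]; rewrite <- Hxy; ring. }
  destruct (prime_divide_square p y Hp) as [b ->]; [exists (a * a)%Z; lia|].
  assert (Hab : (a * a = p * (b * b))%Z).
  { apply (Z.mul_cancel_l _ _ p); [lia|]; rewrite <- Hya; ring. }
  destruct (Z.eq_dec b 0) as [->|Hb]; [ring|].
  exfalso; apply Hb, (IH a b); [nia | exact Hab].
Qed.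

Lemma irrational_sqrt_prime p : prime p -> irrational (sqrt (IZR p)).
Proof.
  intros Hp x y Hy E; apply Hy.
  assert (Hp0 : 0 <= IZR p) by (apply IZR_le; pose proof (prime_ge_2 p Hp); lia).
  assert (Hxy : IZR x = sqrt (IZR p) * IZR y).
  { rewrite E; field; apply not_0_IZR, Hy. }
  apply (prime_square_eq_0 p x y Hp), eq_IZR.
  rewrite !mult_IZR, Hxy; pose proof (sqrt_sqrt (IZR p) Hp0); nra.
Qed.

Lemma irrational_affine a b d x :
  irrational x -> b <> 0%Z -> d <> 0%Z -> irrational ((IZR a + IZR b * x) / IZR d).
Proof.
  intros Hx Hb Hd p q Hq E.
  apply (Hx (p * d - a * q)%Z (b * q)%Z); [lia|].
  apply not_0_IZR in Hb, Hd, Hq.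
  rewrite minus_IZR, !mult_IZR.
  assert (Ex : IZR a + IZR b * x = IZR p / IZR q * IZR d) by (rewrite <- E; field; exact Hd).
  assert (Ex' : x = (IZR p / IZR q * IZR d - IZR a) / IZR b) by (rewrite <- Ex; field; exact Hb).
  rewrite Ex'; field; split; assumption.
Qed.

(* The annotation [n : Z] types the pairs below as [nat * Z], like the configurations
   written in later statements; with [nat * valuation] they would not be found by
   [rewrite]. *)
Lemma step_GP f c :
  step GP f c =
  let n : Z := snd c in
  match fst c with
  | 0%nat => f (1%nat, 1%Z)
  | 1%nat => if Z.leb 1 n then f (2%nat, n) else f (6%nat, n)
  | 2%nat => 1/2 * f (3%nat, n) + 1/2 * f (4%nat, n)
  | 3%nat => f (1%nat, (n + 1)%Z)
  | 4%nat => f (5%nat, (n - 1)%Z)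
  | 5%nat => f (1%nat, (n - 1)%Z)
  | 6%nat => f (6%nat, n)
  | _ => 0
  end.
Proof.
  destruct c as [l n]; unfold step, expect, succ; simpl.
  destruct (Z.leb 1 n); destruct l as [|[|[|[|[|[|[|l]]]]]]]; simpl;
    rewrite ?Rmult_1_l, ?Rplus_0_r; try reflexivity; replace (1 - 1/2) with (1/2) by lra; reflexivity.
Qed.

Lemma GP_prob_nonneg : Forall (fun t => 0 <= tr_prob t) (trans GP).
Proof. repeat constructor; simpl; lra. Qed.

Lemma GP_substochastic c : step GP (fun _ => 1) c <= 1.
Proof.
  destruct c as [l n]; rewrite step_GP; simpl.
  destruct (Z.leb 1 n); destruct l as [|[|[|[|[|[|[|l]]]]]]]; lra.
Qed.

(* An iteration of the loop lowers n by 1/2 and lasts 7/2 steps on average, hence the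
   slope 7; the other offsets make [GP_rank_super] an equality inside the loop. *)
Definition loop_rank (n : Z) : R := 7 * IZR (Z.max n (-1)) + 9.

Definition GP_rank (c : config) : R :=
  let n := snd c in
  match fst c with
  | 0%nat => loop_rank 1 + 1
  | 1%nat => loop_rank n
  | 2%nat => (loop_rank (n + 1) + loop_rank (n - 2)) / 2 + 5/2
  | 3%nat => loop_rank (n + 1) + 1
  | 4%nat => loop_rank (n - 2) + 2
  | 5%nat => loop_rank (n - 1) + 1
  | 6%nat => 1
  | _ => 0
  end.

Lemma loop_rank_ge2 n : 2 <= loop_rank n.
Proof. unfold loop_rank; pose proof (IZR_le _ _ (Z.le_max_r n (-1))); lra. Qed.

Lemma loop_rank_linear n : (-1 <= n)%Z -> loop_rank n = 7 * IZR n + 9.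
Proof. intros Hn; unfold loop_rank; rewrite Z.max_l by exact Hn; reflexivity. Qed.

Lemma GP_rank_nonneg c : 0 <= GP_rank c.
Proof.
  destruct c as [l n]; unfold GP_rank; simpl.
  pose proof (loop_rank_ge2 n); pose proof (loop_rank_ge2 (n + 1));
    pose proof (loop_rank_ge2 (n - 2)); pose proof (loop_rank_ge2 (n - 1)); pose proof (loop_rank_ge2 1).
  destruct l as [|[|[|[|[|[|[|l]]]]]]]; lra.
Qed.

Lemma GP_rank_terminal c : fst c = loc_out GP -> 1 <= GP_rank c.
Proof. destruct c as [l n]; simpl; intros ->; unfold GP_rank; simpl; lra. Qed.

Lemma GP_rank_super c : fst c <> loc_out GP -> step GP (fun c' => GP_rank c' + 1) c <= GP_rank c.
Proof.
  destruct c as [l n]; simpl; intros Hl; rewrite step_GP; unfold GP_rank; simpl.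
  destruct l as [|[|[|[|[|[|[|l]]]]]]]; simpl; try lra.
  - destruct (Z.leb_spec 1 n).
    + rewrite !loop_rank_linear by lia; rewrite plus_IZR, minus_IZR; lra.
    + pose proof (loop_rank_ge2 n); lra.
  - replace (n - 1 - 1)%Z with (n - 2)%Z by ring; lra.
  - contradiction.
Qed.

Definition GP_term_prob : config -> R := term_prob GP GP_prob_nonneg GP_substochastic.

Definition GP_exp_time : config -> R :=
  exp_time GP GP_prob_nonneg GP_substochastic GP_rank GP_rank_nonneg GP_rank_terminal GP_rank_super.

Section LoopRecurrence.

Variables (f : config -> R) (w : R).
Hypothesis f_step : forall c, (fst c <= 5)%nat -> f c = step GP f c + w.

Lemma GP_loop_exit n : (n <= 0)%Z -> f (1%nat, n) = f (6%nat, n) + w.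
Proof.
  intros Hn; rewrite f_step, step_GP by (simpl; lia); simpl.
  destruct (Z.leb_spec 1 n); [lia | reflexivity].
Qed.

Lemma GP_loop_body n :
  (1 <= n)%Z -> 2 * f (1%nat, n) = f (1%nat, (n + 1)%Z) + f (1%nat, (n - 2)%Z) + 7 * w.
Proof.
  intros Hn.
  rewrite f_step, step_GP by (simpl; lia); simpl; destruct (Z.leb_spec 1 n); [|lia].
  rewrite f_step, step_GP by (simpl; lia); simpl.
  rewrite (f_step (3%nat, n)), (f_step (4%nat, n)), !step_GP by (simpl; lia); simpl.
  rewrite (f_step (5%nat, (n - 1)%Z)), step_GP by (simpl; lia); simpl.
  replace (n - 1 - 1)%Z with (n - 2)%Z by ring; lra.
Qed.

Lemma GP_loop_rec : loop_rec (7 * w) (fun k => f (1%nat, (Z.of_nat k - 1)%Z)).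
Proof.
  intros j; cbv beta; rewrite (GP_loop_body (Z.of_nat (S (S j)) - 1)) by lia.
  replace (Z.of_nat (S (S j)) - 1 + 1)%Z with (Z.of_nat (S (S (S j))) - 1)%Z by lia.
  replace (Z.of_nat (S (S j)) - 1 - 2)%Z with (Z.of_nat j - 1)%Z by lia.
  reflexivity.
Qed.

Lemma GP_loop_solution (v : nat -> R) (C K : R) :
  loop_rec (7 * w) v -> v 0%nat = f (6%nat, (-1)%Z) + w -> v 1%nat = f (6%nat, 0%Z) + w ->
  (forall k, Rabs (f (1%nat, (Z.of_nat k - 1)%Z) - v k) <= C * INR k + K) ->
  forall n, (-1 <= n)%Z -> f (1%nat, n) = v (Z.to_nat (n + 1)).
Proof.
  intros Hv H0 H1 Hbound n Hn.
  rewrite <- (loop_rec_unique _ _ _ C K GP_loop_rec Hv); cbv beta; [| | |exact Hbound].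
  - rewrite Z2Nat.id by lia; replace (n + 1 - 1)%Z with n by ring; reflexivity.
  - rewrite H0; apply GP_loop_exit; lia.
  - rewrite H1; apply GP_loop_exit; lia.
Qed.

End LoopRecurrence.

Lemma GP_term_prob_step c : (fst c <= 5)%nat -> GP_term_prob c = step GP GP_term_prob c + 0.
Proof. intros Hc; rewrite Rplus_0_r; apply term_prob_step; simpl; lia. Qed.

Lemma GP_term_prob_terminal (n : Z) : GP_term_prob (6%nat, n) = 1.
Proof. apply term_prob_terminal; reflexivity. Qed.

Lemma GP_term_prob_loop (n : Z) : GP_term_prob (1%nat, n) = 1.
Proof.
  destruct (Z.le_gt_cases n 0) as [Hn|Hn].
  - rewrite (GP_loop_exit _ _ GP_term_prob_step n Hn).
    rewrite GP_term_prob_terminal; ring.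
  - rewrite (GP_loop_solution _ _ GP_term_prob_step (fun _ => 1) 0 2); [reflexivity| | | | |lia].
    + intros j; ring.
    + rewrite GP_term_prob_terminal; ring.
    + rewrite GP_term_prob_terminal; ring.
    + intros k; pose proof (term_prob_bounds GP GP_prob_nonneg GP_substochastic
                              (1%nat, (Z.of_nat k - 1)%Z)).
      fold GP_term_prob in *; apply Rabs_le; pose proof (pos_INR k); lra.
Qed.

(* Locations above 6 have no transitions, so runs reaching them never terminate. *)
Lemma GP_term_prob_one c : (fst c <= 6)%nat -> GP_term_prob c = 1.
Proof.
  destruct c as [l n]; simpl; intros Hl.
  assert (Hpass : forall l' n', (l' = 3 \/ l' = 5)%nat -> GP_term_prob (l', n') = 1).
  { intros l' n' Hl'; rewrite GP_term_prob_step, step_GP by (simpl; lia); simpl.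
    destruct Hl' as [-> | ->]; rewrite GP_term_prob_loop; ring. }
  assert (H4 : forall n', GP_term_prob (4%nat, n') = 1).
  { intros n'; rewrite GP_term_prob_step, step_GP by (simpl; lia); simpl.
    rewrite Hpass by lia; ring. }
  destruct l as [|[|[|[|[|[|[|l]]]]]]]; try (apply Hpass; lia); try lia.
  - rewrite GP_term_prob_step, step_GP by (simpl; lia); simpl.
    rewrite GP_term_prob_loop; ring.
  - apply GP_term_prob_loop.
  - rewrite GP_term_prob_step, step_GP by (simpl; lia); simpl.
    rewrite Hpass, H4 by lia; field.
  - apply H4.
  - apply GP_term_prob_terminal.
Qed.

Lemma GP_exp_time_step c : (fst c <= 5)%nat -> GP_exp_time c = step GP GP_exp_time c + 1.
Proof.
  intros Hc; unfold GP_exp_time; rewrite exp_time_step by (simpl; lia).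
  unfold step at 1; rewrite expect_plus; f_equal.
  change (step GP GP_term_prob c = 1).
  destruct c as [l n]; rewrite step_GP; simpl in *.
  destruct (Z.leb 1 n); destruct l as [|[|[|[|[|[|[|l]]]]]]]; try lia;
    rewrite !GP_term_prob_one by (simpl; lia); lra.
Qed.

Definition psi : R := (1 - sqrt 5) / 2.

Lemma sqrt5_sq : sqrt 5 * sqrt 5 = 5.
Proof. apply sqrt_sqrt; lra. Qed.

Lemma psi_sq : psi ^ 2 = psi + 1.
Proof. unfold psi; pose proof sqrt5_sq; simpl; nra. Qed.

Lemma psi_cube : psi ^ 3 = 2 * psi + 1.
Proof. replace (psi ^ 3) with (psi ^ 2 + psi + psi * (psi ^ 2 - psi - 1)) by ring; rewrite psi_sq; ring. Qed.

Lemma psi_bounds : -1 < psi < 0.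
Proof.
  pose proof sqrt5_sq; pose proof (sqrt_pos 5).
  assert (2 < sqrt 5 < 3) by nra; unfold psi; lra.
Qed.

(* 7 k is a particular solution of [loop_rec 7]; of the homogeneous solutions
   1, phi ^ k, psi ^ k only the bounded ones may occur, and the exit values
   loop_time 0 = loop_time 1 = 2 fix their coefficients. *)
Definition loop_time (k : nat) : R := 7 * INR k - 5 + 7 * (psi ^ 2 - psi ^ S k).

Lemma loop_time_rec : loop_rec (7 * 1) loop_time.
Proof.
  intros j; unfold loop_time; rewrite !S_INR.
  replace (psi ^ S (S (S (S j)))) with (psi ^ S j * psi ^ 3) by (rewrite <- pow_add; f_equal; lia).
  replace (psi ^ S (S (S j))) with (psi ^ S j * psi ^ 2) by (rewrite <- pow_add; f_equal; lia).
  rewrite psi_cube, psi_sq; ring.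
Qed.

Lemma pow_bounded_by_1 x m : -1 <= x <= 1 -> -1 <= x ^ m <= 1.
Proof. intros Hx; induction m as [|m IH]; simpl; [lra | nra]. Qed.

Lemma loop_time_bounds k : 7 * INR k - 12 <= loop_time k <= 7 * INR k + 9.
Proof.
  unfold loop_time; rewrite psi_sq; pose proof psi_bounds.
  pose proof (pow_bounded_by_1 psi (S k)); lra.
Qed.

Lemma GP_exp_time_terminal (n : Z) : GP_exp_time (6%nat, n) = 1.
Proof. apply exp_time_terminal; reflexivity. Qed.

Lemma GP_exp_time_loop (n : Z) :
  (-1 <= n)%Z -> GP_exp_time (1%nat, n) = loop_time (Z.to_nat (n + 1)).
Proof.
  apply (GP_loop_solution _ _ GP_exp_time_step _ 7 14 loop_time_rec).
  - rewrite GP_exp_time_terminal; unfold loop_time; rewrite psi_sq; simpl; ring.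
  - rewrite GP_exp_time_terminal; unfold loop_time; simpl; ring.
  - intros k.
    pose proof (exp_time_bounds GP GP_prob_nonneg GP_substochastic GP_rank GP_rank_nonneg
                  GP_rank_terminal GP_rank_super (1%nat, (Z.of_nat k - 1)%Z)) as Hb.
    fold GP_exp_time in Hb; unfold GP_rank in Hb; simpl in Hb.
    rewrite loop_rank_linear, minus_IZR, <- INR_IZR_INZ in Hb by lia.
    pose proof (loop_time_bounds k); pose proof (pos_INR k); apply Rabs_le; split; lra.
Qed.

Lemma GP_exp_time_init (n0 : Z) : GP_exp_time (0%nat, n0) = (13 + 7 * sqrt 5) / 2.
Proof.
  rewrite GP_exp_time_step, step_GP by (simpl; lia); simpl.
  rewrite GP_exp_time_loop by lia; change (Z.to_nat (1 + 1)) with 2%nat.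
  unfold loop_time; rewrite psi_sq, psi_cube; unfold psi; simpl INR; field.
Qed.

Theorem mainTheorem13 (n0 : Z) :
  terminates_as GP (locs_init GP, n0) /\
  exists ET : R, expected_time_is GP (locs_init GP, n0) ET /\ irrational ET.
Proof.
  split.
  - unfold terminates_as, infinite_sum.
    rewrite <- (GP_term_prob_one (locs_init GP, n0)) by (simpl; lia).
    apply term_prob_cv.
  - exists (GP_exp_time (locs_init GP, n0)); split.
    + apply exp_time_cv.
    + simpl locs_init; rewrite GP_exp_time_init.
      apply irrational_affine; [apply irrational_sqrt_prime, prime_5 | lia | lia].
Qed.
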